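(* Let $L\subseteq\Sigma^*$ be a regular language with $\kappa(L)=n\ge 2$. Then: 1. $\kappa({}_{\le}L)\le n$; 2. $\kappa({}_{\preceq}L)\le 2^n-1$ if $\emptyset$ is not a quotient of $L$, and $\kappa({}_{\preceq}L)\le 2^{n-1}$ if $\emptyset$ is a quotient of $L$; 3. $\kappa({}_{\sqsubseteq}L)\le 2^{n-1}$; 4. $\kappa({}_{\Subset}L)\le 2^{n-2}+1$. Moreover, the bounds are tight. For every $n\ge 2$ and every alphabet with $|\Sigma|\ge 2$: - there is a regular $L$ over $\Sigma$ with $\kappa(L)=n$ and $\kappa({}_{\le}L)=n$; - there is a regular $L$ over $\Sigma$ with $\kappa(L)=n$, without $\emptyset$ as a quotient, and with $\kappa({}_{\preceq}L)=2^n-1$; - there is a regular $L$ over $\Sigma$ with $\kappa(L)=n$, with $\emptyset$ as a quotient, and with $\kappa({}_{\preceq}L)=2^{n-1}$; - there is a regular $L$ over $\Sigma$ with $\kappa(L)=n$ and $\kappa({}_{\sqsubseteq}L)=2^{n-1}$. For every $n\ge 2$ and every alphabet with $|\Sigma|\ge \max(n-2,2)$, there is a regular $L$ over $\Sigma$ with $\kappa(L)=n$ and $\kappa({}_{\Subset}L)=2^{n-2}+1$.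
   Context: $\Sigma$ is a finite non-empty alphabet. For a language $L\subseteq\Sigma^*$ and a word $w$, the (left) quotient of $L$ by $w$ is $L_w=\{x\in\Sigma^*\mid wx\in L\}$. The quotient complexity $\kappa(L)$ is the number of distinct quotients of $L$; for regular $L$ it equals the number of states of the minimal complete DFA for $L$. We say $L$ ''has $\emptyset$'' if $\emptyset$ is one of its quotients. A word $u$ is a prefix (suffix, factor) of $w$ if $w=ux$ ($w=xu$, $w=xuy$) for some words $x,y$. A word $a_1\cdots a_n$ with letters $a_i$ is a subword of $w$ if $w=w_0a_1w_1\cdots a_nw_n$ for some words $w_i$, i.e. a subword is a not necessarily contiguous subsequence. We write $x\le w$, $x\preceq w$, $x\sqsubseteq w$, $x\Subset w$ for ''$x$ is a prefix / suffix / factor / subword of $w$'', respectively. For such a relation $\unlhd$, the $\unlhd$-closure of $L$ is ${}_{\unlhd}L=\{x\in\Sigma^*\mid x\unlhd w \text{ for some } w\in L\}$. *)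

From mathcomp Require Import all_boot.
Set Implicit Arguments. Unset Strict Implicit. Unset Printing Implicit Defensive.

Definition lang (S : finType) := seq S -> Prop.

Definition lang_eq (S : finType) (L1 L2 : lang S) : Prop :=
  forall x, L1 x <-> L2 x.

Definition quot (S : finType) (L : lang S) (w : seq S) : lang S :=
  fun x => L (w ++ x).

Definition regular (S : finType) (L : lang S) : Prop :=
  exists (Q : finType) (d : Q -> S -> Q) (q0 : Q) (F : pred Q),
    forall w, L w <-> foldl d q0 w \in F.

(* kappa L = n : L has exactly n distinct quotients, i.e. there are words
   w_0,...,w_{n-1} whose quotients are pairwise distinct and every quotient
   of L equals one of them. *)
Definition has_kappa (S : finType) (L : lang S) (n : nat) : Prop :=
  exists ws : seq (seq S),
    [/\ size ws = n,
        (forall i j, i < n -> j < n -> i <> j ->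
           ~ lang_eq (quot L (nth [::] ws i)) (quot L (nth [::] ws j)))
      & (forall w, exists2 i, i < n &
           lang_eq (quot L w) (quot L (nth [::] ws i)))].

Definition has_empty (S : finType) (L : lang S) : Prop :=
  exists w, forall x, ~ quot L w x.

Definition closure (S : finType) (r : seq S -> seq S -> bool) (L : lang S)
  : lang S := fun x => exists w, L w /\ r x w.

Definition prefix_closure (S : finType) (L : lang S) := closure (@prefix S) L.
Definition suffix_closure (S : finType) (L : lang S) := closure (@suffix S) L.
Definition factor_closure (S : finType) (L : lang S) := closure (@infix S) L.
Definition subword_closure (S : finType) (L : lang S) := closure (@subseq S) L.

From mathcomp Require Import all_boot zify ssralg zmodp.
From Stdlib Require Import Classical ClassicalEpsilon.
(* Everything is read off a DFA for L whose states are all reachable; the quotient automaton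
   has n states.  A quotient of the prefix closure at w only depends on whether the state
   reached by w is live.  A quotient of the suffix closure at w only depends on the nonempty
   set [img w] of states that w leads to from some state, and a quotient of the factor closure
   on the live part of that set, which misses a dead state (without dead states the factor
   closure is everything).  For the subword closure the relevant set consists of the states
   reached by the superwords of w: it is either all states (when it contains the initial one),
   or its live part avoids both the initial state and a dead state.
   The bounds are attained by automata in which all these state sets occur and are told apart
   by test words: a cyclic letter a together with a letter b acting only at state 0, either
   merging it into its successor or sending it to a sink; the words of bounded length; and,
   for subwords, the words c_i w in which w avoids the letter c_i. *)

Set Implicit Arguments. Unset Strict Implicit. Unset Printing Implicit Defensive.
Import GRing.Theory.

Definition classicb (P : Prop) : bool :=
  if excluded_middle_informative P then true else false.

Lemma classicbP (P : Prop) : reflect P (classicb P).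
Proof. by rewrite /classicb; case: excluded_middle_informative => H; constructor. Qed.

Lemma card_sets (T : finType) : #|[set: {set T}]| = 2 ^ #|T|.
Proof. by rewrite -powersetT card_powerset cardsT. Qed.

Lemma card_nonempty_sets (T : finType) : #|[set: {set T}] :\ set0| = 2 ^ #|T| - 1.
Proof. by rewrite -card_sets [in RHS](cardsD1 set0) in_setT add1n subn1. Qed.

Section Quotients.
Variable S : finType.
Implicit Types (L : lang S) (w v u x y z : seq S).

Lemma lang_eq_sym L1 L2 : lang_eq L1 L2 -> lang_eq L2 L1.
Proof. by move=> E x; split => /E. Qed.

Lemma lang_eq_trans L1 L2 L3 : lang_eq L1 L2 -> lang_eq L2 L3 -> lang_eq L1 L3.
Proof. by move=> E1 E2 x; split => [/E1/E2|/E2/E1]. Qed.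

Lemma lang_eq_quot_cat L w v u :
  lang_eq (quot L w) (quot L v) -> lang_eq (quot L (w ++ u)) (quot L (v ++ u)).
Proof. by move=> E x; rewrite /quot -!catA; exact: E. Qed.

Lemma distinct_quot_reps L (l : seq (seq S)) : exists l' : seq (seq S),
  [/\ size l' <= size l,
      (forall i j, i < size l' -> j < size l' -> i <> j ->
         ~ lang_eq (quot L (nth [::] l' i)) (quot L (nth [::] l' j)))
    & (forall v, v \in l -> exists2 v', v' \in l' & lang_eq (quot L v) (quot L v'))].
Proof.
elim: l => [|x l [l' [size_l' distinct cover]]]; first by exists [::].
have [[v' v'_in x_v']|new_x] :=
  classic (exists2 v', v' \in l' & lang_eq (quot L x) (quot L v')).
  exists l'; split => [||v]; [exact: leqW | exact: distinct |].
  by rewrite inE => /predU1P [->|/cover]; first by exists v'.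
exists (x :: l'); split => [||v]; [exact: size_l' | |].
  move=> [|i] [|j] //= lt_i lt_j ne_ij E.
  - by apply: new_x; exists (nth [::] l' j); first exact: mem_nth.
  - by apply: new_x; exists (nth [::] l' i); [exact: mem_nth | exact: lang_eq_sym].
  - by apply: (distinct i j) => // eq_ij; apply: ne_ij; rewrite eq_ij.
rewrite inE => /predU1P [->|/cover [v' v'_in E]]; first by exists x; rewrite ?mem_head.
by exists v'; rewrite // inE v'_in orbT.
Qed.

Lemma has_kappa_le_size L (l : seq (seq S)) :
  (forall w, exists2 v, v \in l & lang_eq (quot L w) (quot L v)) ->
  exists2 m, has_kappa L m & m <= size l.
Proof.
move=> cover; have [l' [size_l' distinct cover']] := distinct_quot_reps L l.
exists (size l') => //; exists l'; split => // w.
have [v v_in w_v] := cover w; have [v' v'_in v_v'] := cover' v v_in.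
exists (index v' l'); first by rewrite index_mem.
by rewrite nth_index //; exact: lang_eq_trans w_v v_v'.
Qed.

Lemma has_kappa_le_card L (T : finType) (h : seq S -> T) (A : {set T}) :
  (forall w, h w \in A) ->
  (forall w v, h w = h v -> lang_eq (quot L w) (quot L v)) ->
  exists2 m, has_kappa L m & m <= #|A|.
Proof.
move=> hA h_quot.
pose rep t : option (seq S) :=
  if excluded_middle_informative (exists w, h w = t) is left ex
  then Some (proj1_sig (constructive_indefinite_description _ ex)) else None.
have repP w : exists2 v, rep (h w) = Some v & h v = h w.
  rewrite /rep; case: excluded_middle_informative => [ex|[]]; last by exists w.
  by case: constructive_indefinite_description => v; exists v.
have [m kappa_m le_m] : exists2 m, has_kappa L m & m <= size (pmap rep (enum A)).
  apply: has_kappa_le_size => w; have [v rep_w h_v] := repP w.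
  by exists v; [rewrite mem_pmap -rep_w map_f ?mem_enum | apply: h_quot].
exists m => //; apply: leq_trans le_m _.
by rewrite cardE size_pmap count_size.
Qed.

Lemma has_kappa_le_trans L a b :
  (exists2 m, has_kappa L m & m <= a) -> a <= b -> exists2 m, has_kappa L m & m <= b.
Proof. by move=> [m kappa_m le_ma] le_ab; exists m; last exact: leq_trans le_ab. Qed.

Lemma has_kappa_le1 L : (forall x y, L x <-> L y) -> exists2 m, has_kappa L m & m <= 1.
Proof.
move=> const; rewrite -(cards1 tt).
by apply: (has_kappa_le_card (h := fun _ => tt)) => [w|w v _ y]; rewrite ?set11 //; exact: const.
Qed.

Lemma card_le_has_kappa L m (T : finType) (A : {set T}) (f : T -> seq S) :
  has_kappa L m ->
  {in A &, forall a b, a <> b -> ~ lang_eq (quot L (f a)) (quot L (f b))} ->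
  #|A| <= m.
Proof.
move=> [ws [_ _ cover]] distinct.
have idx_ex a : exists i : 'I_m, lang_eq (quot L (f a)) (quot L (nth [::] ws i)).
  by have [i lt_im E] := cover (f a); exists (Ordinal lt_im).
pose idx a := proj1_sig (constructive_indefinite_description _ (idx_ex a)).
have idxP a : lang_eq (quot L (f a)) (quot L (nth [::] ws (idx a))).
  exact: proj2_sig (constructive_indefinite_description _ (idx_ex a)).
have idx_inj : {in A &, injective idx}.
  move=> a b a_in b_in eq_idx; apply: NNPP => ne_ab.
  apply: (distinct a b) => //; apply: lang_eq_trans (idxP a) _.
  by rewrite eq_idx; exact: lang_eq_sym (idxP b).
by rewrite -(card_in_imset idx_inj); apply: leq_trans (max_card _) _; rewrite card_ord.
Qed.

Lemma has_kappa_fooling L B (T : finType) (A : {set T}) (f : T -> seq S) :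
  (exists2 m, has_kappa L m & m <= B) -> B <= #|A| ->
  {in A &, forall a b, a <> b -> ~ lang_eq (quot L (f a)) (quot L (f b))} ->
  has_kappa L B.
Proof.
move=> [m kappa_m le_mB] le_BA distinct.
have le_Am := card_le_has_kappa kappa_m distinct.
by have -> : B = m by apply/eqP; rewrite eqn_leq le_mB (leq_trans le_BA).
Qed.

Lemma has_kappa_fooling_sets L B (T : finType) (A : {set {set T}}) (test : T -> seq S) :
  (exists2 m, has_kappa L m & m <= B) -> B <= #|A| ->
  (forall X, X \in A -> exists w, forall t, quot L w (test t) <-> t \in X) ->
  has_kappa L B.
Proof.
move=> ub le_BA realize.
pose f (X : {set T}) :=
  if excluded_middle_informative (exists w, forall t, quot L w (test t) <-> t \in X) is left ex
  then proj1_sig (constructive_indefinite_description _ ex) else [::].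
have fP X : X \in A -> forall t, quot L (f X) (test t) <-> t \in X.
  rewrite /f => X_in; case: excluded_middle_informative => [ex|[]]; last exact: realize.
  by case: constructive_indefinite_description.
apply: (has_kappa_fooling (f := f) ub le_BA) => X Y X_in Y_in ne_XY E; apply: ne_XY.
apply/setP => t; apply/idP/idP => t_in.
  by apply/(fP Y Y_in)/E/(fP X X_in).
by apply/(fP X X_in)/E/(fP Y Y_in).
Qed.

End Quotients.

Section Closures.
Variable S : finType.
Implicit Types (L : lang S) (w v u x y z : seq S).

Lemma prefix_closureE L x : prefix_closure L x <-> exists v, L (x ++ v).
Proof.
split => [[w [Lw /prefixP [v def_w]]]|[v Lxv]]; first by exists v; rewrite -def_w.
by exists (x ++ v); split => //; apply/prefixP; exists v.
Qed.

Lemma suffix_closureE L x : suffix_closure L x <-> exists u, L (u ++ x).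
Proof.
split => [[w [Lw /suffixP [u def_w]]]|[u Lux]]; first by exists u; rewrite -def_w.
by exists (u ++ x); split => //; apply/suffixP; exists u.
Qed.

Lemma factor_closureE L x : factor_closure L x <-> exists u v, L (u ++ x ++ v).
Proof.
split => [[w [Lw /infixP [u [v def_w]]]]|[u [v Luxv]]]; first by exists u, v; rewrite -def_w.
by exists (u ++ x ++ v); split => //; apply/infixP; exists u, v.
Qed.

Lemma subseq_cat_split (s1 s2 z : seq S) : subseq (s1 ++ s2) z ->
  exists z1 z2, [/\ z = z1 ++ z2, subseq s1 z1 & subseq s2 z2].
Proof.
elim: z s1 => [|c z IH] [|a s1] //=.
- by move=> /eqP ->; exists [::], [::].
- by move=> sub; exists [::], (c :: z).
case: eqP => [->|ne_ac] => [/IH|/(IH (a :: s1))] [z1 [z2 [-> sub1 sub2]]].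
  by exists (c :: z1), z2; rewrite /= eqxx.
exists (c :: z1), z2; split => //=.
by case: eqP.
Qed.

End Closures.

Section DFA.
Variables (S Q : finType) (d : Q -> S -> Q) (q0 : Q) (F : pred Q).
Implicit Types (w v u x y z : seq S) (p q : Q).
Local Notation run := (foldl d).

Definition live : {set Q} := [set q | classicb (exists y, run q y \in F)].
Definition img w : {set Q} := [set run q w | q : Q].
Definition subseq_reach w : {set Q} :=
  [set q | classicb (exists2 z, subseq w z & run q0 z = q)].

Lemma liveP q : reflect (exists y, run q y \in F) (q \in live).
Proof. by rewrite inE; exact: classicbP. Qed.

Lemma img_cat w u : img (w ++ u) = [set run q u | q in img w].
Proof. by rewrite /img -imset_comp; apply: eq_imset => q; rewrite /= foldl_cat. Qed.

Lemma exists_img w (P : Q -> Prop) :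
  (exists2 q, q \in img w & P q) <-> (exists r, P (run r w)).
Proof.
by split => [[_ /imsetP [r _ ->] Pq]|[r Pr]]; [exists r | exists (run r w); first exact: imset_f].
Qed.

Lemma exists_live (A : {set Q}) (P : Q -> Prop) :
  (forall q, P q -> q \in live) ->
  (exists2 q, q \in A & P q) <-> (exists2 q, q \in A :&: live & P q).
Proof.
move=> P_live; split => [[q q_in Pq]|[q]]; last by rewrite inE => /andP [q_in _]; exists q.
by exists q; rewrite // inE q_in P_live.
Qed.

Variable L : lang S.
Hypothesis accepts : forall w, L w <-> run q0 w \in F.

Lemma quot_run w y : quot L w y <-> run (run q0 w) y \in F.
Proof. by rewrite /quot accepts foldl_cat. Qed.

Lemma has_kappa_le_states : exists2 m, has_kappa L m & m <= #|Q|.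
Proof.
rewrite -cardsT; apply: (has_kappa_le_card (h := run q0)) => [w|w v E y]; first exact: in_setT.
by rewrite !quot_run E.
Qed.

Lemma has_empty_dead : has_empty L -> exists e, e \notin live.
Proof.
move=> [w empty_w]; exists (run q0 w); apply/liveP => [[y acc]].
by apply: (empty_w y); apply/quot_run.
Qed.

Lemma prefix_closure_accepts w : prefix_closure L w <-> run q0 w \in live.
Proof.
rewrite prefix_closureE; split => [[v]|/liveP [v acc]]; last by exists v; rewrite accepts foldl_cat.
by rewrite accepts foldl_cat => acc; apply/liveP; exists v.
Qed.

Variable reach_word : Q -> seq S.
Hypothesis reach : forall q, run q0 (reach_word q) = q.

Lemma has_kappa_dfa :
  (forall p q, p != q -> exists y, (run p y \in F) != (run q y \in F)) ->
  has_kappa L #|Q|.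
Proof.
move=> dist.
apply: (has_kappa_fooling (A := setT) (f := reach_word) has_kappa_le_states).
  by rewrite cardsT.
move=> p q _ _ /eqP /dist [y] /negP ne_pq E; apply: ne_pq.
apply/eqP; apply/idP/idP; rewrite -{1}(reach p) -{1}(reach q) => /quot_run /E /quot_run;
  by rewrite reach.
Qed.

Lemma suffix_closure_quotE w y :
  quot (suffix_closure L) w y <-> exists2 q, q \in img w & run q y \in F.
Proof.
rewrite /quot suffix_closureE; split => [[u]|[q /imsetP [p _ ->] acc]].
  by rewrite accepts !foldl_cat => acc; exists (run (run q0 u) w); first exact: imset_f.
by exists (reach_word p); rewrite accepts !foldl_cat reach.
Qed.

Lemma factor_closure_quotE w y : quot (factor_closure L) w y <->
  exists2 q, q \in img w & exists v, run q (y ++ v) \in F.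
Proof.
rewrite /quot factor_closureE; split => [[u [v]]|[q /imsetP [p _ ->] [v acc]]].
  rewrite -catA accepts !foldl_cat => acc.
  by exists (run (run q0 u) w); [exact: imset_f | exists v; rewrite foldl_cat].
by exists (reach_word p), v; rewrite accepts -catA !foldl_cat reach -foldl_cat.
Qed.

Lemma subword_closure_quotE w y : quot (subword_closure L) w y <->
  exists2 q, q \in subseq_reach w & exists2 z, subseq y z & run q z \in F.
Proof.
split => [[z [Lz /subseq_cat_split [z1 [z2 [def_z sub1 sub2]]]]]|[q]].
  exists (run q0 z1); first by rewrite inE; apply/classicbP; exists z1.
  by exists z2; rewrite // -foldl_cat -def_z -accepts.
rewrite inE => /classicbP [z1 sub1 <-] [z2 sub2 acc].
by exists (z1 ++ z2); split; [rewrite accepts foldl_cat | exact: cat_subseq].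
Qed.

Lemma subseq_reach_full w : q0 \in subseq_reach w -> subseq_reach w = setT.
Proof.
rewrite inE => /classicbP [z sub run_z]; apply/setP => q; rewrite !inE.
apply/classicbP; exists (z ++ reach_word q); last by rewrite foldl_cat run_z reach.
exact: subseq_trans sub (prefix_subseq _ _).
Qed.

End DFA.

Section ClosureBounds.
Variables (S Q : finType) (d : Q -> S -> Q) (q0 : Q) (F : pred Q) (L : lang S).
Hypothesis accepts : forall w, L w <-> foldl d q0 w \in F.
Variable reach_word : Q -> seq S.
Hypothesis reach : forall q, foldl d q0 (reach_word q) = q.
Local Notation run := (foldl d).
Local Notation live := (live d F).

Lemma prefix_closure_kappa_le : exists2 m, has_kappa (prefix_closure L) m & m <= #|Q|.
Proof. exact: has_kappa_le_states (prefix_closure_accepts accepts). Qed.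

Lemma suffix_closure_kappa_le :
  exists2 m, has_kappa (suffix_closure L) m & m <= 2 ^ #|Q| - 1.
Proof.
rewrite -card_nonempty_sets; apply: (has_kappa_le_card (h := img d)) => [w|w v E y].
  by rewrite !inE andbT; apply/set0Pn; exists (run q0 w); exact: imset_f.
by rewrite !(suffix_closure_quotE accepts reach) E.
Qed.

Lemma has_kappa_le_live_img (C : lang S) (P : Q -> seq S -> Prop) e :
  e \notin live -> (forall q y, P q y -> q \in live) ->
  (forall w y, quot C w y <-> exists2 q, q \in img d w & P q y) ->
  exists2 m, has_kappa C m & m <= 2 ^ #|Q|.-1.
Proof.
move=> dead_e P_live quotE; rewrite -(cardsC1 e) -card_powerset.
apply: (has_kappa_le_card (h := fun w => img d w :&: live)) => [w|w v E y].
  rewrite powersetE; apply/subsetP => q /setIP [_ live_q].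
  by rewrite in_setC1; apply: contraTneq live_q => ->.
by rewrite !quotE (exists_live (img d w) (P_live^~ y)) (exists_live (img d v) (P_live^~ y)) E.
Qed.

Lemma suffix_closure_kappa_le_dead e : e \notin live ->
  exists2 m, has_kappa (suffix_closure L) m & m <= 2 ^ #|Q|.-1.
Proof.
move=> dead_e; apply: (has_kappa_le_live_img dead_e _ (suffix_closure_quotE accepts reach)).
by move=> q y acc; apply/liveP; exists y.
Qed.

Lemma no_dead_prefix_closure : ~ (exists e, e \notin live) -> forall x, prefix_closure L x.
Proof.
move=> no_dead x; apply/(prefix_closure_accepts accepts).
by apply: NNPP => /negP dead; apply: no_dead; exists (run q0 x).
Qed.

Lemma factor_closure_kappa_le :
  exists2 m, has_kappa (factor_closure L) m & m <= 2 ^ #|Q|.-1.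
Proof.
have [[e dead_e]|no_dead] := classic (exists e, e \notin live).
  apply: (has_kappa_le_live_img dead_e _ (factor_closure_quotE accepts reach)).
  by move=> q y [v acc]; apply/liveP; exists (y ++ v).
apply: has_kappa_le_trans (has_kappa_le1 _) _; last by rewrite expn_gt0.
suff univ x : factor_closure L x by move=> x y; split => _; exact: univ.
have /prefix_closureE [v Lxv] := no_dead_prefix_closure no_dead x.
by apply/factor_closureE; exists [::], v.
Qed.

Lemma subword_closure_kappa_le :
  exists2 m, has_kappa (subword_closure L) m & m <= 2 ^ (#|Q| - 2) + 1.
Proof.
have [[e dead_e]|no_dead] := classic (exists e, e \notin live); last first.
  apply: has_kappa_le_trans (has_kappa_le1 _) _; last by rewrite addn1.
  suff univ x : subword_closure L x by move=> x y; split => _; exact: univ.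
  have /prefix_closureE [v Lxv] := no_dead_prefix_closure no_dead x.
  by exists (x ++ v); split => //; exact: prefix_subseq.
have [live_q0|dead_q0] := boolP (q0 \in live); last first.
  apply: has_kappa_le_trans (has_kappa_le1 _) _; last by rewrite addn1.
  suff empty x : ~ subword_closure L x by move=> x y; split => /empty.
  by move=> [z [/accepts acc _]]; move/negP: dead_q0; apply; apply/liveP; exists z.
pose h w := if q0 \in subseq_reach d q0 w then setT else subseq_reach d q0 w :&: live.
have h_live w : h w :&: live = subseq_reach d q0 w :&: live.
  by rewrite /h; case: ifP => [/(subseq_reach_full reach) -> //|_]; rewrite -setIA setIid.
have card_live : #|live :\ q0| <= #|Q| - 2.
  have : #|live| <= #|Q|.-1.
    rewrite -(cardsC1 e); apply/subset_leq_card/subsetP => q live_q.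
    by rewrite in_setC1; apply: contraTneq live_q => ->.
  by rewrite (cardsD1 q0 live) live_q0; lia.
apply: has_kappa_le_trans (_ : exists2 m, _ & m <= #|setT |: powerset (live :\ q0)|) _.
  apply: (has_kappa_le_card (h := h)) => [w|w v E y].
    rewrite /h; case: ifPn => [_|q0_out]; first exact: setU11.
    rewrite in_setU1 powersetE; apply/orP; right; apply/subsetP => q /setIP [q_in live_q].
    by rewrite in_setD1 live_q andbT; apply: contraTneq q_in => ->.
  rewrite !(subword_closure_quotE accepts).
  have P_live q : (exists2 z, subseq y z & run q z \in F) -> q \in live.
    by move=> [z _ acc]; apply/liveP; exists z.
  by rewrite (exists_live (subseq_reach d q0 w) P_live) (exists_live (subseq_reach d q0 v) P_live)
    -!h_live E.
rewrite cardsU1 card_powerset addnC leq_add ?leq_pexp2l //.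
by case: (_ \notin _).
Qed.

End ClosureBounds.

Section QuotientDFA.
Variables (S : finType) (L : lang S) (n : nat) (ws : seq (seq S)).
Hypothesis distinct : forall i j, i < n -> j < n -> i <> j ->
  ~ lang_eq (quot L (nth [::] ws i)) (quot L (nth [::] ws j)).
Hypothesis cover : forall w, exists2 i, i < n & lang_eq (quot L w) (quot L (nth [::] ws i)).
Local Notation W i := (nth [::] ws i).

Lemma quot_class_ex w : exists i : 'I_n, lang_eq (quot L w) (quot L (W i)).
Proof. by have [i lt_in E] := cover w; exists (Ordinal lt_in). Qed.

Definition quot_class w : 'I_n :=
  proj1_sig (constructive_indefinite_description _ (quot_class_ex w)).

Lemma quot_classP w : lang_eq (quot L w) (quot L (W (quot_class w))).
Proof. exact: proj2_sig (constructive_indefinite_description _ (quot_class_ex w)). Qed.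

Lemma quot_class_unique w (i : 'I_n) : lang_eq (quot L w) (quot L (W i)) -> quot_class w = i.
Proof.
move=> E; apply: val_inj; apply: NNPP => ne.
apply: (distinct (ltn_ord _) (ltn_ord i) ne).
exact: lang_eq_trans (lang_eq_sym (quot_classP w)) E.
Qed.

Definition quot_delta (i : 'I_n) (x : S) : 'I_n := quot_class (W i ++ [:: x]).
Definition quot_final : pred 'I_n := [pred i : 'I_n | classicb (L (W i))].

Lemma run_quot_delta w : foldl quot_delta (quot_class [::]) w = quot_class w.
Proof.
elim/last_ind: w => [|w x IH] //; rewrite foldl_rcons IH /quot_delta -cats1.
apply: quot_class_unique; apply: lang_eq_trans (quot_classP _).
by apply: lang_eq_quot_cat; exact: lang_eq_sym (quot_classP w).
Qed.

Lemma quot_dfa_accepts w : L w <-> foldl quot_delta (quot_class [::]) w \in quot_final.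
Proof.
have := quot_classP w [::]; rewrite /quot !cats0 run_quot_delta inE => E.
by split => [/E /classicbP|/classicbP /E].
Qed.

Lemma quot_dfa_reach (i : 'I_n) : foldl quot_delta (quot_class [::]) (W i) = i.
Proof. by rewrite run_quot_delta; exact: quot_class_unique. Qed.

End QuotientDFA.

Lemma has_kappa_minimal_dfa (S : finType) (L : lang S) n : has_kappa L n ->
  exists (d : 'I_n -> S -> 'I_n) (q0 : 'I_n) (F : pred 'I_n) (reach_word : 'I_n -> seq S),
    (forall w, L w <-> foldl d q0 w \in F) /\ (forall q, foldl d q0 (reach_word q) = q).
Proof.
move=> [ws [_ distinct cover]].
exists (@quot_delta S L n ws cover), (@quot_class S L n ws cover [::]), (quot_final L ws),
  (nth [::] ws).
by split => [w|i]; [exact: quot_dfa_accepts | exact: quot_dfa_reach].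
Qed.

Section Cyclic.
Variables (S : finType) (a b : S) (p : nat).
Hypothesis ab : a != b.
Local Open Scope ring_scope.
Implicit Types (r s t : 'I_p.+1) (X : {set 'I_p.+1}).

Lemma natmul_Zp1 t : Zp1 *+ t = t.
Proof. by rewrite Zp_mulrn; apply: val_inj; rewrite /= modnMml mul1n modn_small. Qed.

Definition shift t : seq S := nseq t a.
(* a^-s b a^s acts as b would if it acted at state s instead of 0. *)
Definition conj_b s : seq S := shift (- s) ++ b :: shift s.

Definition rot_delta s x : 'I_p.+1 := if (x != b) || (s == 0) then s + Zp1 else s.
Definition rot_lang : lang S := fun w => foldl rot_delta 0 w == 0.

Lemma rot_run_a r k : foldl rot_delta r (nseq k a) = r + Zp1 *+ k.
Proof.
elim: k r => [|k IH] r /=; first by rewrite addr0.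
by rewrite IH /rot_delta ab mulrS addrA.
Qed.

Lemma rot_run_shift r t : foldl rot_delta r (shift t) = r + t.
Proof. by rewrite rot_run_a natmul_Zp1. Qed.

Lemma rot_test s t : (foldl rot_delta s (shift (- t)) \in pred1 0) = (s == t).
Proof. by rewrite rot_run_shift inE subr_eq0. Qed.

Lemma rot_accepts w : rot_lang w <-> foldl rot_delta 0 w \in pred1 0.
Proof. by rewrite inE. Qed.

Lemma rot_reach s : foldl rot_delta 0 (shift s) = s.
Proof. by rewrite rot_run_shift add0r. Qed.

Lemma rot_lang_regular : regular rot_lang.
Proof. by exists _, rot_delta, 0, (pred1 0); exact: rot_accepts. Qed.

Lemma rot_has_kappa : has_kappa rot_lang p.+1.
Proof.
rewrite -[p.+1]card_ord; apply: (has_kappa_dfa rot_accepts rot_reach) => s t ne_st.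
by exists (shift (- s)); rewrite !rot_test eqxx [t == s]eq_sym (negbTE ne_st).
Qed.

Lemma rot_no_empty : ~ has_empty rot_lang.
Proof.
move=> [w empty_w]; set t := foldl rot_delta 0 w.
by apply: (empty_w (shift (- t))); have := rot_test t t; rewrite /quot /rot_lang foldl_cat eqxx.
Qed.

Lemma rot_conj_b r s : foldl rot_delta r (conj_b s) = if r == s then s + Zp1 else r.
Proof.
rewrite foldl_cat rot_run_shift /= rot_run_shift /rot_delta eqxx subr_eq0.
by case: eqP => [->|_]; rewrite ?subrK // subrr add0r addrC.
Qed.

Lemma rot_suffix_img w t :
  quot (suffix_closure rot_lang) w (shift (- t)) <-> t \in img rot_delta w.
Proof.
rewrite (suffix_closure_quotE rot_accepts rot_reach).
by split => [[s s_in]|t_in]; [rewrite rot_test => /eqP <- | exists t; rewrite ?rot_test].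
Qed.

Lemma rot_boundary X : X != set0 -> X != setT -> exists2 s, s \notin X & s + Zp1 \in X.
Proof.
rewrite -subTset => /set0Pn [y y_in] /subsetPn [s0 _ s0_out]; apply: NNPP => no_boundary.
have out k : s0 + Zp1 *+ k \notin X.
  elim: k => [|k IH]; first by rewrite addr0.
  by rewrite mulrSr addrA; apply/negP => in_X; apply: no_boundary; exists (s0 + Zp1 *+ k).
by move: (out (y - s0)); rewrite natmul_Zp1 addrC subrK y_in.
Qed.

(* If s \notin X and s + 1 \in X, then conj_b s merges s into s + 1, mapping s |: X onto X. *)
Lemma rot_img_surj X : X != set0 -> exists w, img rot_delta w = X.
Proof.
have img_nil : img rot_delta [::] = setT by apply/setP => s; rewrite inE; apply/imsetP; exists s.
move: {2}#|~: X| (leqnn #|~: X|) => k; elim: k X => [|k IH] X.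
  by rewrite leqn0 cards_eq0 -setCT (inj_eq (can_inj (@setCK _))) => /eqP -> _; exists [::].
move=> card_out X_ne0; have [-> |X_not_full] := eqVneq X setT; first by exists [::].
have [s s_out s1_in] := rot_boundary X_ne0 X_not_full.
have [w img_w] : exists w, img rot_delta w = s |: X.
  apply: IH; last by apply/set0Pn; exists s; exact: setU11.
  move: card_out; rewrite (cardsD1 s) inE s_out setCU ltnS; apply: leq_trans.
  by apply/subset_leq_card/subsetP => r; rewrite !inE => /andP [-> ->].
exists (w ++ conj_b s); rewrite img_cat img_w; apply/setP => r.
apply/imsetP/idP => [[q q_in ->]|r_in].
  rewrite rot_conj_b; case: eqP => // ne_qs.
  by case/setU1P: q_in => // /ne_qs.
exists r; first exact: setU1r.
by rewrite rot_conj_b; case: eqP => // eq_rs; rewrite -eq_rs r_in in s_out.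
Qed.

Definition sink_delta (q : option 'I_p.+1) x : option 'I_p.+1 :=
  if q is Some s then (if x != b then Some (s + Zp1) else if s == 0 then None else q) else None.
Definition sink_lang : lang S := fun w => foldl sink_delta (Some 0) w == Some 0.

Definition keep X : seq S := flatten [seq conj_b s | s <- enum (~: X)].

Lemma sink_run_None w : foldl sink_delta None w = None.
Proof. by elim: w. Qed.

Lemma sink_run_a r k : foldl sink_delta (Some r) (nseq k a) = Some (r + Zp1 *+ k).
Proof.
elim: k r => [|k IH] r /=; first by rewrite addr0.
by rewrite ab IH mulrS addrA.
Qed.

Lemma sink_run_shift r t : foldl sink_delta (Some r) (shift t) = Some (r + t).
Proof. by rewrite sink_run_a natmul_Zp1. Qed.

Lemma sink_conj_b r s : foldl sink_delta (Some r) (conj_b s) = if r == s then None else Some r.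
Proof.
rewrite foldl_cat sink_run_shift /= eqxx subr_eq0.
by case: eqP => _; rewrite ?sink_run_None // sink_run_shift subrK.
Qed.

Lemma sink_run_keep q X :
  foldl sink_delta q (keep X) = if q is Some r then (if r \in X then q else None) else None.
Proof.
case: q => [r|]; last exact: sink_run_None.
rewrite /keep; have -> : (r \in X) = (r \notin enum (~: X)) by rewrite mem_enum inE negbK.
elim: (enum _) => [|s l IH] //=; rewrite foldl_cat sink_conj_b inE.
by case: eqP => _ /=; rewrite ?sink_run_None.
Qed.

Lemma sink_test q t : (foldl sink_delta q (shift (- t)) \in pred1 (Some 0)) = (q == Some t).
Proof.
case: q => [s|]; last by rewrite sink_run_None.
by rewrite sink_run_shift inE !(inj_eq Some_inj) subr_eq0.
Qed.

Definition sink_reach_word (q : option 'I_p.+1) : seq S :=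
  if q is Some s then shift s else [:: b].

Lemma sink_accepts w : sink_lang w <-> foldl sink_delta (Some 0) w \in pred1 (Some 0).
Proof. by rewrite inE. Qed.

Lemma sink_reach q : foldl sink_delta (Some 0) (sink_reach_word q) = q.
Proof. by case: q => [s|]; rewrite /= ?sink_run_shift ?add0r ?eqxx. Qed.

Lemma sink_lang_regular : regular sink_lang.
Proof. by exists _, sink_delta, (Some 0), (pred1 (Some 0)); exact: sink_accepts. Qed.

Lemma sink_has_kappa : has_kappa sink_lang p.+2.
Proof.
have <- : #|{: option 'I_p.+1}| = p.+2 by rewrite card_option card_ord.
apply: (has_kappa_dfa sink_accepts sink_reach).
move=> [s|] [t|] //= ne; [exists (shift (- s)) | exists (shift (- s)) | exists (shift (- t))];
  by rewrite !sink_test ?eqxx // [Some t == _]eq_sym (negbTE ne).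
Qed.

Lemma sink_None_dead : None \notin live sink_delta (pred1 (Some 0)).
Proof. by apply/liveP => [[y]]; rewrite sink_run_None. Qed.

Lemma sink_has_empty : has_empty sink_lang.
Proof. by exists [:: b] => x; rewrite /quot /sink_lang /= eqxx sink_run_None. Qed.

Lemma sink_suffix_keep X t : quot (suffix_closure sink_lang) (keep X) (shift (- t)) <-> t \in X.
Proof.
rewrite (suffix_closure_quotE sink_accepts sink_reach) exists_img.
split => [[q]|t_in]; last by exists (Some t); rewrite sink_run_keep t_in sink_test.
by rewrite sink_run_keep sink_test; case: q => [r|] //; case: ifP => // r_in /eqP [<-].
Qed.

Lemma sink_factor_keep X t :
  quot (factor_closure sink_lang) (keep X) (keep [set t] ++ shift (- t)) <-> t \in X.
Proof.
rewrite (factor_closure_quotE sink_accepts sink_reach) exists_img.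
split => [[q [v]]|t_in]; last first.
  by exists (Some t), [::]; rewrite cats0 foldl_cat !sink_run_keep t_in set11 sink_test.
rewrite -catA !foldl_cat !sink_run_keep; case: q => [r|]; last by rewrite !sink_run_None.
case: ifP => r_in; last by rewrite !sink_run_None.
by rewrite in_set1; case: eqP => [<- //|_]; rewrite !sink_run_None.
Qed.

End Cyclic.

Section Short.
Variables (S : finType) (a : S) (k : nat).

Definition count_delta (i : 'I_k.+2) (x : S) : 'I_k.+2 := inord (minn i.+1 k.+1).
Definition count_final : pred 'I_k.+2 := [pred j : 'I_k.+2 | j <= k].
Definition short_lang : lang S := fun w => size w <= k.

Lemma count_run (i : 'I_k.+2) y : foldl count_delta i y = minn (i + size y) k.+1 :> nat.
Proof.
elim/last_ind: y => [|y x IH]; first by have := ltn_ord i; rewrite addn0 /=; lia.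
by rewrite size_rcons foldl_rcons /= inordK IH; lia.
Qed.

Lemma count_accepts (i : 'I_k.+2) y :
  (foldl count_delta i y \in count_final) = (i + size y <= k).
Proof. by rewrite inE count_run; lia. Qed.

Lemma short_lang_regular : regular short_lang.
Proof. by exists _, count_delta, ord0, count_final => w; rewrite count_accepts. Qed.

Lemma short_lang_has_kappa (L : lang S) : (forall w, L w <-> short_lang w) -> has_kappa L k.+2.
Proof.
move=> LE; rewrite -[k.+2]card_ord.
apply: (@has_kappa_dfa _ _ count_delta ord0 count_final _ _
  (fun i => nseq i a)) => [w|i|].
- by rewrite LE count_accepts.
- by apply: val_inj; rewrite /= count_run size_nseq /=; have := ltn_ord i; lia.
have sep (i j : 'I_k.+2) : i < j ->
    exists y, (foldl count_delta i y \in count_final) != (foldl count_delta j y \in count_final).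
  move=> lt_ij; exists (nseq (k - i) a).
  by rewrite !count_accepts size_nseq; have := ltn_ord j; lia.
move=> i j; case: (ltngtP i j) => [/sep //|/sep [y ne_ij] _|/val_inj ->]; last by rewrite eqxx.
by exists y; rewrite eq_sym.
Qed.

Lemma prefix_closure_short w : prefix_closure short_lang w <-> short_lang w.
Proof.
rewrite prefix_closureE; split => [[v]|short_w]; last by exists [::]; rewrite cats0.
by rewrite /short_lang /= size_cat; lia.
Qed.

Lemma subword_closure_short w : subword_closure short_lang w <-> short_lang w.
Proof.
split => [[z [short_z /size_subseq]]|short_w]; last by exists w; rewrite subseq_refl.
by move: short_z; rewrite /short_lang /=; lia.
Qed.

End Short.

Section Avoid.
Variables (S : finType) (k : nat) (c : 'I_k.+1 -> S).
Hypothesis c_inj : injective c.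
Implicit Types (i j : 'I_k.+1) (x y w z : seq S).

Definition letter_index (x : S) : option 'I_k.+1 := [pick i | c i == x].

Lemma letter_index_c i : letter_index (c i) = Some i.
Proof. by rewrite /letter_index; case: pickP => [j /eqP /c_inj -> //|/(_ i)]; rewrite eqxx. Qed.

Definition avoids i (x : S) : bool := if letter_index x is Some j then j != i else false.

Lemma avoids_c i j : avoids i (c j) = (j != i).
Proof. by rewrite /avoids letter_index_c. Qed.

Lemma avoids_count i w : all (avoids i) w -> count_mem (c i) w = 0.
Proof.
move=> av; apply/count_memPn/negP => /(allP av).
by rewrite avoids_c eqxx.
Qed.

Definition avoid_delta (q : option (option 'I_k.+1)) (x : S) : option (option 'I_k.+1) :=
  if q is Some o then
    (if o is Some i then (if avoids i x then q else None) else omap Some (letter_index x))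
  else None.
(* The words c_i w where w only uses letters c_j with j != i, and the empty word. *)
Definition avoid_lang : lang S := fun w => foldl avoid_delta (Some None) w != None.

Lemma avoid_run_dead w : foldl avoid_delta None w = None.
Proof. by elim: w. Qed.

Lemma avoid_run i w :
  foldl avoid_delta (Some (Some i)) w = if all (avoids i) w then Some (Some i) else None.
Proof.
elim: w => [|x w IH] //=; rewrite /avoid_delta -/avoid_delta.
by case: (avoids i x); rewrite ?avoid_run_dead.
Qed.

Lemma avoid_lang_cons i w : avoid_lang (c i :: w) = all (avoids i) w.
Proof. by rewrite /avoid_lang /= letter_index_c /= avoid_run; case: all. Qed.

Lemma avoiding_subword i w : all (avoids i) w ->
  subword_closure avoid_lang w /\ subword_closure avoid_lang (c i :: w).
Proof.
move=> av; have L_ciw : avoid_lang (c i :: w) by rewrite avoid_lang_cons.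
by split; exists (c i :: w); rewrite ?subseq_cons ?subseq_refl.
Qed.

Lemma repeated_not_subword w : (forall i, 1 < count_mem (c i) w) ->
  ~ subword_closure avoid_lang w.
Proof.
move=> rep [z [Lz sub]].
have le_count i : 1 < count_mem (c i) z.
  apply: leq_trans (rep i) _; move: (c i); apply/(count_subseqP w z).
  by exists w.
clear sub; case: z Lz le_count => [|x z] Lz le_count; first by have := le_count ord0.
move: Lz; rewrite /avoid_lang /=; case def_x: (letter_index x) => [i|] /=;
  last by rewrite avoid_run_dead.
rewrite avoid_run; case: ifP => // av _; move: (le_count i) => /=.
rewrite avoids_count //; move: def_x; rewrite /letter_index; case: pickP => // j /eqP <- [->].
by rewrite eqxx.
Qed.

Definition double (l : seq 'I_k.+1) : seq S := flatten [seq [:: c j; c j] | j <- l].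

Lemma count_double_compl i (A : {set 'I_k.+1}) :
  i \notin A -> 1 < count_mem (c i) (double (enum (~: A))).
Proof.
rewrite -[i \notin A]in_setC -mem_enum; elim: (enum _) => [|j l IH] //.
rewrite inE => /predU1P [->|/IH]; rewrite /= ?eqxx //.
by move/leq_trans; apply; rewrite addnA leq_addl.
Qed.

Lemma avoids_double i l : i \notin l -> all (avoids i) (double l).
Proof.
elim: l => [|j l IH] //; rewrite inE negb_or => /andP [ne_ij /IH].
by rewrite /= !avoids_c eq_sym ne_ij.
Qed.

Definition avoid_final : pred (option (option 'I_k.+1)) := [pred q | q != None].
Definition avoid_reach_word (q : option (option 'I_k.+1)) : seq S :=
  if q is Some o then (if o is Some i then [:: c i] else [::]) else [:: c ord0; c ord0].

Lemma avoid_accepts w : avoid_lang w <-> foldl avoid_delta (Some None) w \in avoid_final.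
Proof. by []. Qed.

Lemma avoid_reach q : foldl avoid_delta (Some None) (avoid_reach_word q) = q.
Proof. by case: q => [[i|]|] //=; rewrite letter_index_c //= avoids_c eqxx. Qed.

Lemma avoid_lang_regular : regular avoid_lang.
Proof. by exists _, avoid_delta, (Some None), avoid_final. Qed.

Lemma avoid_has_kappa : has_kappa avoid_lang k.+3.
Proof.
have <- : #|{: option (option 'I_k.+1)}| = k.+3 by rewrite !card_option card_ord.
apply: (has_kappa_dfa avoid_accepts avoid_reach).
move=> [[i|]|] [[j|]|] //= ne; try by exists [::].
- have ne_ij : i != j by apply: contraNneq ne => ->.
  by exists [:: c i]; rewrite /= !avoids_c eqxx ne_ij.
- by exists [:: c i]; rewrite /= letter_index_c /= avoids_c eqxx.
- by exists [:: c j]; rewrite /= letter_index_c /= avoids_c eqxx.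
Qed.

(* In avoid_word X ++ avoid_test t every letter occurs twice, unless t = Some j with j \in X. *)
Definition avoid_word (X : {set 'I_k.+1}) : seq S := c ord0 :: double (enum (~: X)).
Definition avoid_test (t : option 'I_k.+1) : seq S :=
  if t is Some j then double (enum [set~ j]) else c ord0 :: double (enum [set~ ord0]).

Lemma avoid_test_subword t : subword_closure avoid_lang (avoid_test t).
Proof.
have av j : all (avoids j) (double (enum [set~ j])).
  by apply: avoids_double; rewrite mem_enum !inE eqxx.
by case: t => [j|]; [case: (avoiding_subword (av j)) | case: (avoiding_subword (av ord0))].
Qed.

Lemma avoid_word_test X t :
  subword_closure avoid_lang (avoid_word X ++ avoid_test t) <-> t \in [set Some j | j in X].
Proof.
case: t => [j|]; last first.
  split => [sub|/imsetP [j _ //]]; exfalso.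
  apply: (repeated_not_subword _ sub) => i; rewrite /= count_cat /=.
  case: (eqVneq i ord0) => [->|ne_i0]; first by rewrite eqxx /=; lia.
  have := @count_double_compl i [set ord0]; rewrite in_set1 ne_i0 => /(_ isT) /leq_trans; apply.
  by rewrite !addnA leq_addl.
rewrite (mem_imset _ _ Some_inj); split => [sub|j_in]; last first.
  have av : all (avoids j) (double (enum (~: X)) ++ double (enum [set~ j])).
    by rewrite all_cat !avoids_double // mem_enum !inE ?j_in ?eqxx.
  rewrite /avoid_word /=; case: (eqVneq j ord0) => [<-|ne_j0]; first by case: (avoiding_subword av).
  have av0 : all (avoids j) (c ord0 :: double (enum (~: X)) ++ double (enum [set~ j])).
    by rewrite /= avoids_c eq_sym ne_j0.
  by case: (avoiding_subword av0).
apply: NNPP => /negP j_out; apply: (repeated_not_subword _ sub) => i; rewrite /= count_cat.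
case: (eqVneq i j) => [->|ne_ij].
  by apply: leq_trans (count_double_compl j_out) _; rewrite addnCA leq_addr.
have := @count_double_compl i [set j]; rewrite in_set1 ne_ij => /(_ isT) /leq_trans; apply.
by rewrite addnA leq_addl.
Qed.

End Avoid.

Lemma prefix_closure_tight (S : finType) n : 2 <= n -> 0 < #|S| ->
  exists L : lang S, [/\ regular L, has_kappa L n & has_kappa (prefix_closure L) n].
Proof.
case: n => [|[|k]] // _ /card_gt0P [a _]; exists (@short_lang S k).
split; [exact: short_lang_regular | exact: (short_lang_has_kappa a) |].
by apply: (short_lang_has_kappa a) => w; exact: prefix_closure_short.
Qed.

Lemma suffix_closure_tight (S : finType) n : 1 <= n -> 1 < #|S| ->
  exists L : lang S, [/\ regular L, has_kappa L n, ~ has_empty L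
                       & has_kappa (suffix_closure L) (2 ^ n - 1)].
Proof.
case: n => [|p] // _ /card_gt1P [a [b [_ _ ab]]]; exists (rot_lang b p).
split; [exact: rot_lang_regular | exact: (rot_has_kappa p ab) | exact: rot_no_empty ab |].
apply: (has_kappa_fooling_sets (A := [set: {set 'I_p.+1}] :\ set0)
  (test := fun t => shift a (- t)%R)).
- by have := suffix_closure_kappa_le (rot_accepts b p) (rot_reach ab); rewrite card_ord.
- by rewrite card_nonempty_sets card_ord.
move=> X; rewrite !inE andbT => X_ne0; have [w img_w] := rot_img_surj ab X_ne0.
by exists w => t; rewrite -img_w; exact: rot_suffix_img.
Qed.

Lemma suffix_closure_tight_dead (S : finType) n : 2 <= n -> 1 < #|S| ->
  exists L : lang S, [/\ regular L, has_kappa L n, has_empty L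
                       & has_kappa (suffix_closure L) (2 ^ n.-1)].
Proof.
case: n => [|[|p]] // _ /card_gt1P [a [b [_ _ ab]]]; exists (sink_lang b p).
split; [exact: sink_lang_regular | exact: (sink_has_kappa p ab) | exact: sink_has_empty |].
apply: (has_kappa_fooling_sets (A := [set: {set 'I_p.+1}]) (test := fun t => shift a (- t)%R)).
- have := suffix_closure_kappa_le_dead (sink_accepts b p) (sink_reach ab) (sink_None_dead b p).
  by rewrite card_option card_ord.
- by rewrite card_sets card_ord.
by move=> X _; exists (keep a b X) => t; exact: sink_suffix_keep.
Qed.

Lemma factor_closure_tight (S : finType) n : 2 <= n -> 1 < #|S| ->
  exists L : lang S, [/\ regular L, has_kappa L n & has_kappa (factor_closure L) (2 ^ n.-1)].
Proof.
case: n => [|[|p]] // _ /card_gt1P [a [b [_ _ ab]]]; exists (sink_lang b p).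
split; [exact: sink_lang_regular | exact: (sink_has_kappa p ab) |].
apply: (has_kappa_fooling_sets (A := [set: {set 'I_p.+1}])
  (test := fun t => keep a b [set t] ++ shift a (- t)%R)).
- have := factor_closure_kappa_le (sink_accepts b p) (sink_reach ab).
  by rewrite card_option card_ord.
- by rewrite card_sets card_ord.
by move=> X _; exists (keep a b X) => t; exact: sink_factor_keep.
Qed.

Lemma subword_closure_tight (S : finType) n : 2 <= n -> maxn (n - 2) 2 <= #|S| ->
  exists L : lang S, [/\ regular L, has_kappa L n
                       & has_kappa (subword_closure L) (2 ^ (n - 2) + 1)].
Proof.
rewrite geq_max => n2 /andP [le_nS /ltnW /card_gt0P [a _]].
case: n n2 le_nS => [|[|[|k]]] // _ le_kS.
  exists (@short_lang S 0); split; [exact: short_lang_regular | exact: (short_lang_has_kappa a) |].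
  by apply: (short_lang_has_kappa a) => w; exact: subword_closure_short.
pose c (i : 'I_k.+1) : S := enum_val (widen_ord le_kS i).
have c_inj : injective c by move=> i j /enum_val_inj [] /val_inj.
exists (avoid_lang c); split; [exact: avoid_lang_regular | exact: avoid_has_kappa |].
pose images := [set [set Some j | j in X] | X : {set 'I_k.+1}].
apply: (has_kappa_fooling_sets (A := setT |: images) (test := avoid_test c)).
- have := subword_closure_kappa_le (avoid_accepts c) (avoid_reach c_inj).
  by rewrite !card_option card_ord.
- have full_out : [set: option 'I_k.+1] \notin images.
    apply/imsetP => [[X _ full]]; have := in_setT (None : option 'I_k.+1).
    by rewrite full => /imsetP [].
  rewrite cardsU1 full_out card_imset -?cardsT ?card_sets ?card_ord 1?addnC //.
  exact: imset_inj Some_inj.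
move=> _ /setU1P [->|/imsetP [X _ ->]].
  by exists [::] => t; split => // _; exact: avoid_test_subword.
by exists (avoid_word c X) => t; exact: avoid_word_test.
Qed.

Theorem theorem1 :
  (* upper bounds *)
  (forall (S : finType) (L : lang S) (n : nat),
     0 < #|S| -> 2 <= n -> regular L -> has_kappa L n ->
     [/\ (exists2 m, has_kappa (prefix_closure L) m & m <= n),
         (~ has_empty L ->
            exists2 m, has_kappa (suffix_closure L) m & m <= 2 ^ n - 1),
         (has_empty L ->
            exists2 m, has_kappa (suffix_closure L) m & m <= 2 ^ n.-1),
         (exists2 m, has_kappa (factor_closure L) m & m <= 2 ^ n.-1)
       & (exists2 m, has_kappa (subword_closure L) m & m <= 2 ^ (n - 2) + 1)])
  /\
  (* tightness for prefix, suffix, factor closures *)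
  (forall (S : finType) (n : nat), 2 <= n -> 2 <= #|S| ->
     [/\ (exists L : lang S, [/\ regular L, has_kappa L n
                               & has_kappa (prefix_closure L) n]),
         (exists L : lang S, [/\ regular L, has_kappa L n, ~ has_empty L
                               & has_kappa (suffix_closure L) (2 ^ n - 1)]),
         (exists L : lang S, [/\ regular L, has_kappa L n, has_empty L
                               & has_kappa (suffix_closure L) (2 ^ n.-1)])
       & (exists L : lang S, [/\ regular L, has_kappa L n
                               & has_kappa (factor_closure L) (2 ^ n.-1)])])
  /\
  (* tightness for subword closure *)
  (forall (S : finType) (n : nat), 2 <= n -> maxn (n - 2) 2 <= #|S| ->
     exists L : lang S, [/\ regular L, has_kappa L n
                          & has_kappa (subword_closure L) (2 ^ (n - 2) + 1)]).
Proof.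
split; [|split].
- move=> S L n _ _ _ /has_kappa_minimal_dfa [d [q0 [F [reach_word [acc reach]]]]].
  split.
  + by have := prefix_closure_kappa_le acc; rewrite card_ord.
  + by have := suffix_closure_kappa_le acc reach; rewrite card_ord.
  + move=> /(has_empty_dead acc) [e dead_e].
    by have := suffix_closure_kappa_le_dead acc reach dead_e; rewrite card_ord.
  + by have := factor_closure_kappa_le acc reach; rewrite card_ord.
  + by have := subword_closure_kappa_le acc reach; rewrite card_ord.
- move=> S n n2 S2; split.
  + exact: prefix_closure_tight n2 (ltnW S2).
  + exact: suffix_closure_tight (ltnW n2) S2.
  + exact: suffix_closure_tight_dead.
  + exact: factor_closure_tight.
- exact: subword_closure_tight.
Qed.
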